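(* For all real $a,r$ with $0<a<1$, $0<r<1$ and $a\neq r$, $$\frac12(a^2+1)^2\left[\frac{1}{(ar+1)^2(a-r)^2}+\frac{1}{(r+a)^2(ar-1)^2}\right]-\frac{(1-r^2)r}{(1+r^2)^4}>0.$$ *)

From Stdlib Require Export Reals Lra.

From Stdlib Require Import Reals Lra Psatz.
Open Scope R_scope.

(* The bracket exceeds 1, because (a r + 1) |a - r| < 1 on the open unit
   square, so the first summand is above 1/2; the subtracted term is at most
   r (1 - r^2), whose maximum on [0, 1] is 2 / (3 sqrt 3) < 1/2. *)

Lemma mul_add1_sub_lt1 (x y : R) :
  0 <= x -> x <= y -> y < 1 -> (x * y + 1) * (y - x) < 1.
Proof.
  intros hx hxy hy1.
  (* The left side is increasing in y and equals 1 - x^2 at y = 1. *)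
  assert (h1 : (x + 1) * (1 - x) - (x * y + 1) * (y - x)
               = (1 - y) * (1 + x * (y + 1 - x))) by ring.
  assert (h2 : 0 < (1 - y) * (1 + x * (y + 1 - x))).
  { apply Rmult_lt_0_compat; [lra|]. assert (0 <= x * (y + 1 - x)) by nra. lra. }
  nra.
Qed.

Lemma sq_mul_add1_sub_lt1 (x y : R) :
  0 <= x < 1 -> 0 <= y < 1 -> (x * y + 1)^2 * (x - y)^2 < 1.
Proof.
  intros hx hy.
  destruct (Rle_or_lt x y) as [hxy | hyx].
  - assert (hp : (x * y + 1) * (y - x) < 1) by (apply mul_add1_sub_lt1; lra).
    assert (0 <= (x * y + 1) * (y - x)) by (apply Rmult_le_pos; nra).
    replace ((x * y + 1)^2 * (x - y)^2) with (((x * y + 1) * (y - x))^2) by ring.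
    nra.
  - assert (hp : (y * x + 1) * (x - y) < 1) by (apply mul_add1_sub_lt1; lra).
    assert (0 <= (y * x + 1) * (x - y)) by (apply Rmult_le_pos; nra).
    replace ((x * y + 1)^2 * (x - y)^2) with (((y * x + 1) * (x - y))^2) by ring.
    nra.
Qed.

Lemma mul_sub_cube_lt_half (r : R) : 0 <= r -> r * (1 - r^2) < 1/2.
Proof.
  intros hr.
  assert (h : 1/2 - r * (1 - r^2)
              = (r - 3/5)^2 * (r + 6/5) + 2/25 * r + 17/250) by field.
  assert (0 <= (r - 3/5)^2 * (r + 6/5)) by (apply Rmult_le_pos; [apply pow2_ge_0 | lra]).
  lra.
Qed.

Lemma div_le_self (x d : R) : 0 <= x -> 1 <= d -> x / d <= x.
Proof.
  intros hx hd. unfold Rdiv.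
  assert (/ d <= 1) by (rewrite <- Rinv_1; apply Rinv_le_contravar; lra).
  assert (0 < / d) by (apply Rinv_0_lt_compat; lra).
  nra.
Qed.

Lemma sq_mul_sq_pos (x y : R) : x <> 0 -> y <> 0 -> 0 < x^2 * y^2.
Proof.
  intros hx hy. rewrite <- !Rsqr_pow2.
  apply Rmult_lt_0_compat; now apply Rsqr_pos_lt.
Qed.

Lemma one_lt_inv (x : R) : 0 < x < 1 -> 1 < 1 / x.
Proof.
  intros hx. unfold Rdiv. rewrite Rmult_1_l, <- Rinv_1.
  apply Rinv_lt_contravar; lra.
Qed.

Theorem lemma1 (a r : R) (ha0 : 0 < a) (ha1 : a < 1) (hr0 : 0 < r) (hr1 : r < 1)
  (har : a <> r) :
  (1/2) * (a^2 + 1)^2 *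
    (1 / ((a*r + 1)^2 * (a - r)^2) + 1 / ((r + a)^2 * (a*r - 1)^2))
  - (1 - r^2) * r / (1 + r^2)^4 > 0.
Proof.
  assert (hX : 0 < (a*r + 1)^2 * (a - r)^2 < 1).
  { split; [|apply sq_mul_add1_sub_lt1; lra].
    apply sq_mul_sq_pos; nra. }
  assert (hY : 0 < 1 / ((r + a)^2 * (a*r - 1)^2)).
  { apply Rdiv_lt_0_compat; [lra|]. apply sq_mul_sq_pos; nra. }
  pose proof (one_lt_inv _ hX) as hinvX.
  assert (hnum : 1 <= (a^2 + 1)^2) by nra.
  assert (hden : 1 <= (1 + r^2)^4).
  { rewrite <- (pow1 4). apply pow_incr. nra. }
  assert (hsub : (1 - r^2) * r / (1 + r^2)^4 < 1/2).
  { eapply Rle_lt_trans; [apply div_le_self; [nra | exact hden]|].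
    rewrite Rmult_comm. apply mul_sub_cube_lt_half. lra. }
  nra.
Qed.
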